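(* Let $(A,I)$ be a perfect prism with Frobenius $\varphi$. Let $x\in A$ be such that $\varphi(x)=x^p(1+py)$ for some $y\in A$. Then \[x=[a]\prod_{i=1}^{\infty}\bigl(1+p\varphi^{-i}(y)\bigr)^{p^{i-1}},\] where $a\in A/p$ is the reduction of $x$ modulo $p$ and $[a]\in A=W(A/p)$ is its Teichmüller lift.
   Context: For a perfect prism $(A,I)$, $A$ is $p$-torsion free and classically $p$-complete with $A/p$ perfect, so $A=W(A/p)$, $\varphi$ is an automorphism, and the infinite product converges $p$-adically. *)

From HB Require Import structures.
From mathcomp Require Import all_boot all_order all_algebra.
Set Implicit Arguments. Unset Strict Implicit. Unset Printing Implicit Defensive.
Import GRing.Theory.
Local Open Scope ring_scope.

Section PAdic.
Variables (p : nat) (A : comPzRingType).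

Definition pdiv (n : nat) (a : A) : Prop := exists b : A, a = (p%:R ^+ n) * b.

Definition p_torsion_free : Prop := forall a : A, p%:R * a = 0 -> a = 0.

Definition padic_separated : Prop :=
  forall a : A, (forall n, pdiv n a) -> a = 0.
Definition padic_complete : Prop :=
  forall u : nat -> A, (forall n, pdiv n (u n.+1 - u n)) ->
    exists l : A, forall n, pdiv n (l - u n).

Definition padic_lim (u : nat -> A) (l : A) : Prop :=
  forall n, exists N, forall m, (N <= m)%N -> pdiv n (u m - l).

Definition modp_perfect : Prop :=
  (forall a : A, pdiv 1 (a ^+ p) -> pdiv 1 a) /\
  (forall a : A, exists b : A, pdiv 1 (a - b ^+ p)).

Definition frob_lift (phi : A -> A) : Prop :=
  forall a : A, pdiv 1 (phi a - a ^+ p).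

(* t is the Teichmuller lift [a] of the reduction a of x modulo p:
   [a] = lim_n z_n^(p^n) for any lifts z_n of a^(1/p^n); precisely
   t = z^(p^n) mod p^(n+1) whenever z^(p^n) = x mod p. *)
Definition teich_lift (x t : A) : Prop :=
  forall (n : nat) (z : A), pdiv 1 (z ^+ (p ^ n) - x) ->
    pdiv n.+1 (t - z ^+ (p ^ n)).

End PAdic.

From Pilot Require Import Defs.
From HB Require Import structures.
From mathcomp Require Import all_boot all_order all_algebra.
From mathcomp Require Import ring.
Set Implicit Arguments. Unset Strict Implicit. Unset Printing Implicit Defensive.
Import GRing.Theory.
Local Open Scope ring_scope.

(* Pulling the relation phi(x) = x^p (1 + p y) back along phi^-1 n times gives
   x = x_n^(p^n) Q_n, where x_n = phi^-n(x) and Q_n is the n-th partial product.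
   Each new factor of Q is a p^n-th power of an element congruent to 1 mod p,
   so Q_n = 1 mod p and Q_(n+1) = Q_n mod p^(n+1); hence Q_n converges, and
   x_n^(p^n) = x mod p.  So x_n lifts a^(1/p^n), whence x_n^(p^n) = [a] mod p^(n+1)
   and x - [a] Q_n is divisible by p^(n+1) for every n. *)

Section Divisibility.
Variables (p : nat) (A : comPzRingType).
Local Notation pdiv := (@Defs.pdiv p A).

Lemma pdiv0 n : pdiv n 0.
Proof. by exists 0; rewrite mulr0. Qed.

Lemma pdivD n a b : pdiv n a -> pdiv n b -> pdiv n (a + b).
Proof. by move=> [c ->] [d ->]; exists (c + d); rewrite mulrDr. Qed.

Lemma pdivN n a : pdiv n a -> pdiv n (- a).
Proof. by move=> [c ->]; exists (- c); rewrite mulrN. Qed.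

Lemma pdivB n a b : pdiv n a -> pdiv n b -> pdiv n (a - b).
Proof. by move=> ha hb; apply: pdivD => //; apply: pdivN. Qed.

Lemma pdivMl n c a : pdiv n a -> pdiv n (c * a).
Proof. by move=> [d ->]; exists (c * d); rewrite mulrCA. Qed.

Lemma pdivMr n c a : pdiv n a -> pdiv n (a * c).
Proof. by rewrite mulrC; apply: pdivMl. Qed.

Lemma pdivM m n a b : pdiv m a -> pdiv n b -> pdiv (m + n) (a * b).
Proof. by move=> [c ->] [d ->]; exists (c * d); rewrite exprD; ring. Qed.

Lemma pdivW m n a : (m <= n)%N -> pdiv n a -> pdiv m a.
Proof.
move=> le_mn [c ->]; exists (p%:R ^+ (n - m) * c).
by rewrite mulrA -exprD subnKC.
Qed.

Lemma pdiv_pM a : pdiv 1 (p%:R * a).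
Proof. by exists a; rewrite expr1. Qed.

Lemma pdiv_sum n m (F : 'I_m -> A) :
  (forall i, pdiv n (F i)) -> pdiv n (\sum_(i < m) F i).
Proof. by move=> hF; apply: (big_ind (pdiv n)) => //; [apply: pdiv0 | apply: pdivD]. Qed.

Lemma pdiv_padic_lim (u : nat -> A) l :
  (forall n, pdiv n (l - u n)) -> padic_lim p u l.
Proof.
move=> hl n; exists n => m le_nm.
by apply: (pdivW le_nm); rewrite -opprB; apply: pdivN.
Qed.

End Divisibility.

Section PowerCongruences.
Variables (p : nat) (A : comPzRingType).
Local Notation pdiv := (@Defs.pdiv p A).

(* As [a = b] mod [p], the sum in [a^p - b^p = (a - b) \sum_i a^(p-1-i) b^i]
   is [p b^(p-1)] mod [p]. *)
Lemma pdiv_subXp k a b : pdiv k.+1 (a - b) -> pdiv k.+2 (a ^+ p - b ^+ p).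
Proof.
move=> hab; rewrite subrXX -addn1; apply: pdivM => //.
have hab1 : pdiv 1 (a - b) by apply: pdivW hab.
have -> : \sum_(i < p) a ^+ (p.-1 - i) * b ^+ i =
    \sum_(i < p) (a ^+ (p.-1 - i) - b ^+ (p.-1 - i)) * b ^+ i
    + \sum_(i < p) b ^+ (p.-1 - i) * b ^+ i.
  by rewrite -big_split /=; apply: eq_bigr => i _; rewrite mulrBl subrK.
apply: pdivD.
  by apply: pdiv_sum => i; apply: pdivMr; rewrite subrXX; apply: pdivMr.
have -> : \sum_(i < p) b ^+ (p.-1 - i) * b ^+ i = \sum_(i < p) b ^+ p.-1.
  apply: eq_bigr => i _; rewrite -exprD subnK // -ltnS prednK //.
  exact: leq_ltn_trans (ltn_ord i).
by rewrite sumr_const card_ord -mulr_natl; apply: pdiv_pM.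
Qed.

Lemma pdiv_subXpn n a b : pdiv 1 (a - b) -> pdiv n.+1 (a ^+ (p ^ n) - b ^+ (p ^ n)).
Proof.
move=> hab; elim: n => [|n IHn]; first by rewrite expn0 !expr1.
by rewrite expnSr !exprM; apply: pdiv_subXp.
Qed.

Lemma pdiv_1pM_Xpn n a : pdiv n.+1 ((1 + p%:R * a) ^+ (p ^ n) - 1).
Proof.
have := @pdiv_subXpn n (1 + p%:R * a) 1; rewrite expr1n; apply.
by rewrite addrC addKr; apply: pdiv_pM.
Qed.

Hypothesis p_prime : prime p.

Lemma pdiv_frobD u v : pdiv 1 ((u + v) ^+ p - (u ^+ p + v ^+ p)).
Proof.
have [q def_p] : exists q, p = q.+1 by exists p.-1; rewrite prednK ?prime_gt0.
rewrite [in X in pdiv 1 X]def_p exprDn big_ord_recr big_ord_recl /= subnn binn bin0 subn0.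
rewrite !expr0 !mulr1n mulr1 mul1r addrAC [_ - _]addrAC subrr add0r -def_p.
apply: pdiv_sum => i.
have lt0ip : (0 < bump 0 i < p)%N by rewrite def_p /bump add1n ltnS /=; apply: ltn_ord.
have /dvdnP [k ->] := prime_dvd_bin p_prime lt0ip.
by rewrite mulrnA -mulr_natl; apply: pdiv_pM.
Qed.

Hypothesis frob_inj : forall a : A, pdiv 1 (a ^+ p) -> pdiv 1 a.

(* Mod [p], [(a - b)^p = a^p + (-b)^p] and [(-b)^p = -b^p], the latter
   because [(-b + b)^p = 0]. *)
Lemma pdiv_subXp_inj a b : pdiv 1 (a ^+ p - b ^+ p) -> pdiv 1 (a - b).
Proof.
move=> hab; apply: frob_inj.
have hNb := pdiv_frobD (- b) b.
rewrite addNr expr0n eqn0Ngt prime_gt0 // in hNb.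
have -> : (a - b) ^+ p = ((a - b) ^+ p - (a ^+ p + (- b) ^+ p)) + (a ^+ p - b ^+ p)
    - (0 - ((- b) ^+ p + b ^+ p)) by ring.
by apply: pdivB => //; apply: pdivD => //; apply: pdiv_frobD.
Qed.

Lemma pdiv_subXpn_inj n a b : pdiv 1 (a ^+ (p ^ n) - b ^+ (p ^ n)) -> pdiv 1 (a - b).
Proof.
elim: n => [|n IHn]; first by rewrite expn0 !expr1.
by rewrite expnSr !exprM => hab; apply/IHn/pdiv_subXp_inj.
Qed.

Lemma teich_liftP (x t : A) (r : nat -> A) :
    (forall n, pdiv 1 (r n ^+ (p ^ n) - x)) ->
    (forall n, pdiv n.+1 (t - r n ^+ (p ^ n))) ->
  teich_lift p x t.
Proof.
move=> hr ht n z hz.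
have hzr : pdiv 1 (z - r n).
  apply: (@pdiv_subXpn_inj n).
  by rewrite -(subrKA x); apply: pdivD => //; rewrite -opprB; apply: pdivN.
rewrite -(subrKA (r n ^+ (p ^ n))); apply: pdivD => //.
by rewrite -opprB; apply/pdivN/pdiv_subXpn.
Qed.

End PowerCongruences.

Section Completion.
Variables (p : nat) (A : comPzRingType).
Local Notation pdiv := (@Defs.pdiv p A).
Hypothesis complete : padic_complete p A.

Lemma padic_complete_lim (u : nat -> A) :
    (forall n, pdiv n.+1 (u n.+1 - u n)) ->
  exists l, forall n, pdiv n.+1 (l - u n).
Proof.
move=> hu; have [l hl] := complete (fun n => pdivW (leqnSn n) (hu n)).
by exists l => n; rewrite -(subrKA (u n.+1)); apply: pdivD.
Qed.

End Completion.

Section Factorization.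
Variables (p : nat) (A : comPzRingType).
Local Notation pdiv := (@Defs.pdiv p A).
Variables (phi : {rmorphism A -> A}) (phiinv : A -> A).
Hypotheses (phiK : cancel phi phiinv) (phiinvK : cancel phiinv phi).
Variables (x y : A).
Hypothesis phi_x : phi x = x ^+ p * (1 + p%:R * y).

Lemma phiinv_twist a b :
  phiinv (a ^+ p * (1 + p%:R * b)) = phiinv a ^+ p * (1 + p%:R * phiinv b).
Proof.
apply: (can_inj phiK).
by rewrite phiinvK rmorphM rmorphXn rmorphD rmorph1 rmorphM rmorph_nat !phiinvK.
Qed.

Definition frob_root n := iter n phiinv x.

Definition frob_prod n :=
  \prod_(i < n) (1 + p%:R * iter i.+1 phiinv y) ^+ (p ^ i).

Lemma frob_rootS n :
  frob_root n = frob_root n.+1 ^+ p * (1 + p%:R * iter n.+1 phiinv y).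
Proof.
rewrite /frob_root -{1}(phiK x) phi_x -iterSr.
by elim: n.+1 => //= k ->; rewrite phiinv_twist.
Qed.

Lemma frob_prodS n :
  frob_prod n.+1 = frob_prod n * (1 + p%:R * iter n.+1 phiinv y) ^+ (p ^ n).
Proof. by rewrite /frob_prod big_ord_recr. Qed.

Lemma frob_root_factor n : x = frob_root n ^+ (p ^ n) * frob_prod n.
Proof.
elim: n => [|n IHn]; first by rewrite /frob_prod big_ord0 expn0 expr1 mulr1.
by rewrite frob_prodS {1}IHn frob_rootS exprMn expnS exprM; ring.
Qed.

Lemma frob_prod_cauchy n : pdiv n.+1 (frob_prod n.+1 - frob_prod n).
Proof.
rewrite frob_prodS -{2}[frob_prod n]mulr1 -mulrBr.
by apply: pdivMl; apply: pdiv_1pM_Xpn.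
Qed.

Lemma frob_prod_sub1 n : pdiv 1 (frob_prod n - 1).
Proof.
elim: n => [|n IHn]; first by rewrite /frob_prod big_ord0 subrr; apply: pdiv0.
by rewrite -(subrKA (frob_prod n)); apply: pdivD => //; apply: pdivW (frob_prod_cauchy n).
Qed.

Lemma frob_root_Xpn n : pdiv 1 (frob_root n ^+ (p ^ n) - x).
Proof.
rewrite [X in _ - X](frob_root_factor n) -{1}[_ ^+ _]mulr1 -mulrBr -opprB mulrN.
by apply/pdivN/pdivMl/frob_prod_sub1.
Qed.

Lemma frob_root_Xpn_cauchy n :
  pdiv n.+1 (frob_root n.+1 ^+ (p ^ n.+1) - frob_root n ^+ (p ^ n)).
Proof.
rewrite expnS exprM; apply: pdiv_subXpn.
rewrite [X in _ - X](frob_rootS n) -{1}[_ ^+ p]mulr1 -mulrBr opprD addNKr mulrN.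
by rewrite mulrCA; apply/pdivN/pdiv_pM.
Qed.

Hypotheses (p_prime : prime p) (complete : padic_complete p A).
Hypothesis frob_inj : forall a : A, pdiv 1 (a ^+ p) -> pdiv 1 a.

Lemma teich_lift_exists : exists t, teich_lift p x t.
Proof.
have [t ht] := padic_complete_lim complete frob_root_Xpn_cauchy.
by exists t; apply: teich_liftP frob_root_Xpn ht.
Qed.

Hypothesis separated : padic_separated p A.

Lemma frob_prod_lim t :
  teich_lift p x t -> exists P, padic_lim p frob_prod P /\ x = t * P.
Proof.
move=> ht; have [P hP] := padic_complete_lim complete frob_prod_cauchy.
exists P; split; first by apply: pdiv_padic_lim => n; apply: pdivW (hP n).
apply/eqP; rewrite -subr_eq0; apply/eqP/separated => n.
have ht_n := ht n _ (frob_root_Xpn n).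
have -> : x - t * P =
    - ((t - frob_root n ^+ (p ^ n)) * frob_prod n) - t * (P - frob_prod n).
  by rewrite {1}(frob_root_factor n); ring.
by apply: pdivB; [apply/pdivN/pdivMr/(pdivW _ ht_n) | apply/pdivMl/(pdivW _ (hP n))].
Qed.

End Factorization.

Theorem lemma2p12 (p : nat) (A : comPzRingType)
    (phi : {rmorphism A -> A}) (phiinv : A -> A)
    (hp : prime p)
    (htf : p_torsion_free p A)
    (hsep : padic_separated p A) (hcomp : padic_complete p A)
    (hperf : modp_perfect p A)
    (hlift : frob_lift p phi)
    (hK1 : cancel phi phiinv) (hK2 : cancel phiinv phi)
    (x y : A) (hxy : phi x = x ^+ p * (1 + p%:R * y)) :
  (exists t : A, teich_lift p x t) /\
  (forall t : A, teich_lift p x t ->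
     exists P : A,
       padic_lim p
         (fun N => \prod_(i < N) (1 + p%:R * iter i.+1 phiinv y) ^+ (p ^ i)) P
       /\ x = t * P).
Proof.
split; first exact: (teich_lift_exists hK1 hK2 hxy hp hcomp hperf.1).
exact: (frob_prod_lim hK1 hK2 hxy hcomp hsep).
Qed.
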